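(* 1. There exists an infinite word whose letter frequencies all exist and are rational but which is not weak abelian periodic. 2. If an infinite word $w$ over a finite alphabet has a letter whose frequency in $w$ exists and is irrational, then $w$ is not weak abelian periodic. 3. If an infinite binary word $w$ does not have frequencies of letters, then $w$ is weak abelian periodic. 4. There exists an infinite ternary word which does not have frequencies of letters and which is not weak abelian periodic.
   Context: For a finite word $u$, $|u|_a$ is the number of occurrences of the letter $a$ in $u$, and $\rho_a(u)=|u|_a/|u|$ for nonempty $u$. For an infinite word $w$, the frequency of a letter $a$ in $w$ is $\rho_a(w)=\lim_{n\to\infty}\rho_a(\mathrm{pref}_n(w))$ when this limit exists, where $\mathrm{pref}_n(w)$ is the prefix of length $n$; $w$ ''does not have frequencies of letters'' if this limit fails to exist for some letter. An infinite word $w$ over a finite alphabet $\Sigma$ is weak abelian periodic if $w=v_0v_1v_2\cdots$ with $v_0$ finite and $v_1,v_2,\dots$ nonempty finite words such that $\rho_a(v_i)=\rho_a(v_j)$ for all $a\in\Sigma$ and all $i,j\ge1$. *)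

From Stdlib Require Import Reals QArith.
From mathcomp Require Import all_boot.
Open Scope nat_scope.
Set Implicit Arguments. Unset Strict Implicit. Unset Printing Implicit Defensive.

Definition occ (Sigma : finType) (w : nat -> Sigma) (a : Sigma) (i j : nat) : nat :=
  count (fun k => w k == a) (iota i (j - i)).

(* rho_a(w[i..j)) = |w[i..j)|_a / |w[i..j)| (meaningful for i < j). *)
Definition rho (Sigma : finType) (w : nat -> Sigma) (a : Sigma) (i j : nat) : R :=
  Rdiv (INR (occ w a i j)) (INR (j - i)).

Definition freq_is (Sigma : finType) (w : nat -> Sigma) (a : Sigma) (l : R) : Prop :=
  Un_cv (fun n => rho w a 0 n.+1) l.

Definition freq_exists (Sigma : finType) (w : nat -> Sigma) (a : Sigma) : Prop :=
  exists l : R, freq_is w a l.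

Definition has_letter_freqs (Sigma : finType) (w : nat -> Sigma) : Prop :=
  forall a : Sigma, freq_exists w a.

Definition is_rational (x : R) : Prop := exists q : Q, x = Q2R q.

(* Weak abelian periodicity: w = v0 v1 v2 ... with v0 = w[0..b 0) and
   v_(i+1) = w[b i .. b (i+1)), b strictly increasing (so v_1, v_2, ... are
   nonempty), and rho_a(v_i) = rho_a(v_j) for all letters a and all i, j >= 1. *)
Definition weak_abelian_periodic (Sigma : finType) (w : nat -> Sigma) : Prop :=
  exists b : nat -> nat,
    (forall i, b i < b i.+1) /\
    (forall (a : Sigma) (i j : nat),
        rho w a (b i) (b i.+1) = rho w a (b j) (b j.+1)).

From Stdlib Require Import Reals QArith Lra Lia Classical ClassicalEpsilon.
From mathcomp Require Import all_boot zify.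
Open Scope nat_scope.
Set Implicit Arguments. Unset Strict Implicit. Unset Printing Implicit Defensive.

(* If w splits into blocks sharing the letter ratio r, then |w[0..n)|_a = r n + O(1)
   along the block boundaries, so an existing frequency equals r and is rational.
   Marking the positions n with n + 1 a perfect square gives a letter of frequency 0
   that occurs in every long enough factor, so no block decomposition exists; letting
   the remaining positions alternate between two letters on the ranges [4^j, 4^(j+1))
   moreover destroys the frequencies.
   For a binary word and a rational k/m, if m |w[0..n)|_a - k n changes sign infinitely
   often, then at each downward crossing its value lies in [0, k), so some value recurs
   infinitely often, and consecutive recurrences cut w into blocks of letter ratio exactly
   k/m. Otherwise each k/m is eventually above or below the prefix ratios, which forces
   them to form a Cauchy sequence. *)

Section Occurrences.
Variables (Sigma : finType) (w : nat -> Sigma).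

Lemma occ_cat a i j k : i <= j -> j <= k -> occ w a i k = occ w a i j + occ w a j k.
Proof.
move=> hij hjk; rewrite /occ.
have -> : k - i = (j - i) + (k - j) by lia.
by rewrite iotaD count_cat subnKC.
Qed.

Lemma occ_nn a i : occ w a i i = 0.
Proof. by rewrite /occ subnn. Qed.

Lemma occ_le_len a i j : occ w a i j <= j - i.
Proof. by rewrite /occ -[X in _ <= X](size_iota i) count_size. Qed.

Lemma occS a n : occ w a 0 n.+1 = occ w a 0 n + (w n == a).
Proof. by rewrite (@occ_cat a 0 n n.+1) // /occ subSnn /= addn0. Qed.

Lemma occ_eq0 a i j : (forall k, i <= k < j -> w k != a) -> occ w a i j = 0.
Proof.
move=> H; apply/eqP; rewrite -leqn0 leqNgt -has_count.
by apply/hasPn => k; rewrite mem_iota => hk; apply: H; lia.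
Qed.

Lemma occ_compl a x i j : (forall k, i <= k < j -> (w k == x) = (w k != a)) ->
  occ w a i j + occ w x i j = j - i.
Proof.
move=> H; rewrite /occ -[RHS](size_iota i) -(count_predC (fun k => w k == a)).
by congr (_ + _); apply: eq_in_count => k; rewrite mem_iota => hk; apply: H; lia.
Qed.

End Occurrences.

Lemma card2_eq_other (Sigma : finType) (a x : Sigma) :
  #|Sigma| = 2 -> x != a -> forall y : Sigma, (y == x) = (y != a).
Proof.
move=> hc hxa y; have [->|hya] := eqVneq y a; first by rewrite eq_sym (negbTE hxa).
have : #|predC1 a| <= 1 by rewrite cardC1 hc.
by move/card_le1_eqP/(_ y x); rewrite !inE => /(_ hya hxa) ->; rewrite eqxx.
Qed.

Section NatRatios.
Local Open Scope R_scope.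

Lemma INR_addn m n : INR (m + n) = INR m + INR n.
Proof. by rewrite -plusE plus_INR. Qed.

Lemma INR_muln m n : INR (m * n) = INR m * INR n.
Proof. by rewrite -multE mult_INR. Qed.

Lemma INR_subn m n : (n <= m)%N -> INR (m - n) = INR m - INR n.
Proof. by move=> h; rewrite -minusE minus_INR //; apply/leP. Qed.

Lemma INR_gt0 n : (0 < n)%N -> 0 < INR n.
Proof. by move=> h; apply: lt_0_INR; apply/ltP. Qed.

Lemma ratio_le c n q p : (0 < n)%N -> (0 < p)%N -> (c * p <= q * n)%N ->
  INR c / INR n <= INR q / INR p.
Proof.
move=> /INR_gt0 hn /INR_gt0 hp /leP/le_INR; rewrite !INR_muln => h.
apply: (Rmult_le_reg_r (INR n * INR p)); first exact: Rmult_lt_0_compat.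
have -> : INR c / INR n * (INR n * INR p) = INR c * INR p by field; lra.
have -> : INR q / INR p * (INR n * INR p) = INR q * INR n by field; lra.
lra.
Qed.

Lemma ratio_lt c n q p : (0 < n)%N -> (0 < p)%N -> (c * p < q * n)%N ->
  INR c / INR n < INR q / INR p.
Proof.
move=> /INR_gt0 hn /INR_gt0 hp /ltP/lt_INR; rewrite !INR_muln => h.
apply: (Rmult_lt_reg_r (INR n * INR p)); first exact: Rmult_lt_0_compat.
have -> : INR c / INR n * (INR n * INR p) = INR c * INR p by field; lra.
have -> : INR q / INR p * (INR n * INR p) = INR q * INR n by field; lra.
lra.
Qed.

Lemma ratio_eq c n q p : (0 < n)%N -> (0 < p)%N -> (c * p = q * n)%N ->
  INR c / INR n = INR q / INR p.
Proof.
move=> hn hp h; apply: Rle_antisym; apply: ratio_le => //; first by rewrite h.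
by rewrite -h.
Qed.

Lemma ratio_rational c n : (0 < n)%N -> is_rational (INR c / INR n).
Proof.
move=> hn; exists (Z.of_nat c # Pos.of_nat n)%Q.
rewrite /Q2R /= -!INR_IZR_INZ.
by rewrite -Znat.positive_nat_Z Nat2Pos.id -?INR_IZR_INZ //; lia.
Qed.

Lemma Rabs_div_lt (x y e : R) : 0 < y -> Rabs x < e * y -> Rabs (x / y) < e.
Proof.
move=> hy hx.
have hxy : Rabs x = Rabs (x / y) * y.
  rewrite -[in LHS](_ : x / y * y = x); last by field; lra.
  by rewrite Rabs_mult (Rabs_pos_eq y) //; lra.
rewrite hxy in hx; nra.
Qed.

End NatRatios.

Section Frequencies.
Local Open Scope R_scope.
Variables (Sigma : finType) (w : nat -> Sigma).

Lemma freq_of_affine_counts a (u : nat -> nat) (r C l : R) :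
  (forall i, (i < u i)%N) -> (forall i, INR (occ w a 0 (u i)) = r * INR (u i) + C) ->
  freq_is w a l -> l = r.
Proof.
move=> hu hC hl; apply: cond_eq => eps he.
have he2 : 0 < eps / 2 by lra.
have [N hN] := hl _ he2.
have [M hM] := INR_archimed _ (Rabs C) he2.
set n := u (N + M)%N.
have hn : (N + M < n)%N by apply: hu.
have hnpos : 0 < INR n by apply: INR_gt0; lia.
have hrho : rho w a 0 n = r + C / INR n.
  by rewrite /rho subn0 hC -/n; field; lra.
have hCn : Rabs (C / INR n) < eps / 2.
  apply: Rabs_div_lt => //.
  have : INR M <= INR n by apply: le_INR; apply/leP; lia.
  nra.
have := hN n.-1 ltac:(apply/leP; lia); rewrite prednK; last by lia.
rewrite /R_dist hrho => /Rabs_def2 [? ?]; move/Rabs_def2: hCn => [? ?].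
apply: Rabs_def1; lra.
Qed.

Section BlockDecomposition.
Variables (a : Sigma) (b : nat -> nat).
Hypothesis b_incr : forall i, (b i < b i.+1)%N.
Hypothesis rho_blocks : forall i j, rho w a (b i) (b i.+1) = rho w a (b j) (b j.+1).

Lemma block_bound i : (i + b 0 <= b i)%N.
Proof. by elim: i => // i IH; have := b_incr i; lia. Qed.

Lemma occ_blocks i : INR (occ w a (b 0) (b i)) = rho w a (b 0) (b 1) * INR (b i - b 0).
Proof.
elim: i => [|i IH]; first by rewrite occ_nn subnn /=; ring.
have := block_bound i; have := b_incr i => hi hi0.
rewrite (@occ_cat _ w a (b 0) (b i) (b i.+1)) ?INR_addn ?IH; try lia.
have -> : (b i.+1 - b 0 = (b i - b 0) + (b i.+1 - b i))%N by lia.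
have hlen : 0 < INR (b i.+1 - b i) by apply: INR_gt0; lia.
by rewrite INR_addn -(rho_blocks i 0) /rho; field; lra.
Qed.

Lemma freq_blocks l : freq_is w a l -> l = rho w a (b 0) (b 1).
Proof.
set r := rho w a (b 0) (b 1).
apply: (@freq_of_affine_counts a (fun i => b i.+1) r (INR (occ w a 0 (b 0)) - r * INR (b 0))).
  by move=> i; have := block_bound i.+1; lia.
move=> i; have := block_bound i.+1 => hi.
rewrite (@occ_cat _ w a 0 (b 0) (b i.+1)) ?INR_addn ?occ_blocks ?INR_subn //; try lia.
by rewrite -/r; ring.
Qed.

End BlockDecomposition.

Lemma freq_rational_of_wap a l :
  weak_abelian_periodic w -> freq_is w a l -> is_rational l.
Proof.
move=> [b [b_incr rho_blocks]] /(@freq_blocks a b b_incr (rho_blocks a)) ->.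
by apply: ratio_rational; have := b_incr 0%N; lia.
Qed.

End Frequencies.

(* [succ_square k] holds exactly when k + 1 is a perfect square. *)
Definition succ_square (k : nat) : bool := Nat.sqrt k.+1 != Nat.sqrt k.

Section SquareMarks.
Local Open Scope R_scope.
Variables (Sigma : finType) (w : nat -> Sigma) (a : Sigma).
Hypothesis w_marks : forall k, (w k == a) = succ_square k.

Lemma occ_square_marks n : (occ w a 0 n = Nat.sqrt n)%N.
Proof.
elim: n => [|n IH]; first by rewrite occ_nn.
rewrite occS IH w_marks /succ_square.
case: (Nat.sqrt_succ_or n) => ->; last by rewrite eqxx addn0.
by case: eqP => //; lia.
Qed.

Lemma freq_square_marks : freq_is w a 0.
Proof.
move=> eps he; have [K hK] := INR_archimed eps 1 he.
exists (K * K)%N => n /leP hn.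
rewrite /R_dist /rho occ_square_marks subn0 Rminus_0_r.
set s := Nat.sqrt n.+1; have [hs1 hs2] := Nat.sqrt_spec n.+1 ltac:(lia).
have hKs : (K <= s)%N by rewrite leqNgt; apply/negP => /ltP hsK; nia.
have hss : INR s * INR s <= INR n.+1 by rewrite -INR_muln; apply: le_INR.
have hKs' : INR K <= INR s by apply: le_INR; apply/leP.
have hK0 : (0 < K)%N by rewrite lt0n; apply/eqP => K0; move: hK; rewrite K0 /=; lra.
have hs0 : 0 < INR s by apply: INR_gt0; apply: leq_trans hKs.
have hsK : INR s * INR K <= INR s * INR s by nra.
apply: Rabs_div_lt; first exact: INR_gt0.
by rewrite Rabs_pos_eq; nra.
Qed.

Lemma square_marks_not_wap : ~ weak_abelian_periodic w.
Proof.
move=> [b [b_incr rho_blocks]].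
have r0 := @freq_blocks _ w a b b_incr (rho_blocks a) 0 freq_square_marks.
pose s := Nat.sqrt (b 0%N); pose i := (s.+1 * s.+1)%N.
have hbi := @block_bound b b_incr i.
have : occ w a (b 0%N) (b i) = 0%N.
  by apply: INR_eq; rewrite (@occ_blocks _ w a b b_incr (rho_blocks a)) -r0 Rmult_0_l.
have := @occ_cat _ w a 0 (b 0%N) (b i) ltac:(lia) ltac:(lia).
rewrite !occ_square_marks => hs hz; rewrite hz addn0 -/s in hs.
have : (Nat.sqrt i <= Nat.sqrt (b i))%coq_nat by apply: Nat.sqrt_le_mono; lia.
by rewrite Nat.sqrt_square hs; lia.
Qed.

End SquareMarks.

Section BinaryComplement.
Local Open Scope R_scope.
Variables (Sigma : finType) (w : nat -> Sigma) (a x : Sigma).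
Hypotheses (card_Sigma : #|Sigma| = 2%N) (x_neq_a : x != a).

Lemma rho_compl i j : (i < j)%N -> rho w x i j = 1 - rho w a i j.
Proof.
move=> hij; rewrite /rho.
have := @occ_compl _ w a x i j (fun k _ => @card2_eq_other _ a x card_Sigma x_neq_a (w k)).
move=> hsum; have -> : occ w x i j = (j - i - occ w a i j)%N by lia.
have hlen : 0 < INR (j - i) by apply: INR_gt0; lia.
by rewrite INR_subn ?occ_le_len //; field; lra.
Qed.

Lemma freq_compl l : freq_is w a l -> freq_is w x (1 - l).
Proof.
move=> hl eps he; have [N hN] := hl eps he; exists N => n /hN.
rewrite /R_dist rho_compl // -Rabs_Ropp; congr (Rabs _ < _); ring.
Qed.

End BinaryComplement.

Definition square_word (k : nat) : 'I_2 := if succ_square k then ord_max else ord0.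

Lemma square_word_marks k : (square_word k == ord_max) = succ_square k.
Proof. by rewrite /square_word; case: succ_square. Qed.

Section SquareWord.
Local Open Scope R_scope.

Theorem rational_freqs_not_wap_exists :
  exists (k : nat) (w : nat -> 'I_k),
    (forall a : 'I_k, exists l : R, freq_is w a l /\ is_rational l) /\
    ~ weak_abelian_periodic w.
Proof.
have freq_max := freq_square_marks square_word_marks.
exists 2%N, square_word; split; last exact: square_marks_not_wap square_word_marks.
have rational_nat n : is_rational (INR n).
  by have := @ratio_rational n 1; rewrite /= Rdiv_1_r; apply.
move=> a; have [->|a_neq_max] := eqVneq a ord_max.
  by exists 0; split; last exact: rational_nat 0%N.
exists (1 - 0); split; first by apply: freq_compl freq_max; rewrite ?card_ord.
by rewrite Rminus_0_r; exact: rational_nat 1%N.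
Qed.

End SquareWord.

Definition oscillating_word (k : nat) : 'I_3 :=
  if succ_square k then ord_max
  else if odd (trunc_log 4 k) then Ordinal (isT : 1 < 3) else ord0.

Lemma oscillating_word_marks k : (oscillating_word k == ord_max) = succ_square k.
Proof. by rewrite /oscillating_word; case: succ_square => //; case: odd. Qed.

Lemma sqrt_pow4 j : Nat.sqrt (4 ^ j) = 2 ^ j.
Proof. by rewrite -[4]/(2 * 2) expnMn; apply: Nat.sqrt_square. Qed.

Lemma occ_oscillating_odd j : odd j -> occ oscillating_word ord0 0 (4 ^ j.+1) <= 4 ^ j.
Proof.
move=> j_odd; rewrite (@occ_cat _ _ _ 0 (4 ^ j)) ?leq_exp2l // (@occ_eq0 _ _ _ (4 ^ j)).
  by rewrite addn0; apply: leq_trans (occ_le_len _ _ _ _) _; rewrite subn0.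
move=> k hk; rewrite /oscillating_word (trunc_log_eq _ hk) // j_odd.
by case: succ_square.
Qed.

Lemma occ_oscillating_even j :
  ~~ odd j -> 3 * 4 ^ j - 2 * 2 ^ j <= occ oscillating_word ord0 0 (4 ^ j.+1).
Proof.
move=> j_even; have hj : 4 ^ j <= 4 ^ j.+1 by rewrite leq_exp2l.
have hcompl : occ oscillating_word ord0 (4 ^ j) (4 ^ j.+1) +
    occ oscillating_word ord_max (4 ^ j) (4 ^ j.+1) = 4 ^ j.+1 - 4 ^ j.
  apply: occ_compl => k hk.
  by rewrite /oscillating_word (trunc_log_eq _ hk) // (negbTE j_even); case: succ_square.
have hmarks := @occ_cat _ oscillating_word ord_max 0 (4 ^ j) (4 ^ j.+1) (leq0n _) hj.
rewrite !(occ_square_marks oscillating_word_marks) !sqrt_pow4 in hmarks.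
rewrite (@occ_cat _ _ _ 0 (4 ^ j)) //; rewrite !expnS in hcompl hmarks *; lia.
Qed.

Section OscillatingWord.
Local Open Scope R_scope.

Lemma oscillating_word_no_freq : ~ freq_exists oscillating_word ord0.
Proof.
move=> [l hl]; have [N hN] := hl (1 / 8) ltac:(lra).
have close j : (N <= j)%N ->
    Rabs (rho oscillating_word ord0 0 (4 ^ j.+1) - l) < 1 / 8.
  move=> hj; have hpow : (j < 4 ^ j.+1)%N by apply: ltn_trans (ltn_expl _ _); rewrite ?ltnS.
  by have := hN (4 ^ j.+1).-1 ltac:(apply/leP; lia); rewrite prednK //; lia.
pose je := (2 * N).+2; pose jo := (2 * N).+1.
have ratio_even : 5 / 8 <= rho oscillating_word ord0 0 (4 ^ je.+1).
  have -> : 5 / 8 = INR 5 / INR 8 by rewrite /=; field.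
  rewrite /rho subn0; apply: ratio_le; rewrite ?expn_gt0 //.
  have := @occ_oscillating_even je ltac:(by rewrite /je /= oddM).
  have h4 : (4 ^ je = 2 ^ je * 2 ^ je)%N by rewrite -expnMn.
  have h2 : (4 <= 2 ^ je)%N by rewrite /je !expnS; have := expn_gt0 2 (2 * N); lia.
  rewrite expnS h4; nia.
have ratio_odd : rho oscillating_word ord0 0 (4 ^ jo.+1) <= 1 / 4.
  have -> : 1 / 4 = INR 1 / INR 4 by rewrite /=; field.
  rewrite /rho subn0; apply: ratio_le; rewrite ?expn_gt0 //.
  have := @occ_oscillating_odd jo ltac:(by rewrite /jo /= oddM).
  rewrite expnS; lia.
have := close je ltac:(rewrite /je; lia); have := close jo ltac:(rewrite /jo; lia).
move=> /Rabs_def2 [? ?] /Rabs_def2 [? ?]; lra.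
Qed.

Theorem no_freqs_not_wap_exists :
  exists w : nat -> 'I_3, ~ has_letter_freqs w /\ ~ weak_abelian_periodic w.
Proof.
exists oscillating_word; split; last exact: square_marks_not_wap oscillating_word_marks.
by move/(_ ord0); apply: oscillating_word_no_freq.
Qed.

End OscillatingWord.

Lemma increasing_seq_of_unbounded (P : nat -> Prop) :
  (forall N, exists n, N <= n /\ P n) ->
  exists b : nat -> nat, (forall i, b i < b i.+1) /\ forall i, P (b i).
Proof.
move=> hP; pose next N := proj1_sig (constructive_indefinite_description _ (hP N)).
have next_spec N : N <= next N /\ P (next N).
  by rewrite /next; case: constructive_indefinite_description.
exists (fun i => iter i (fun n => next n.+1) (next 0)); split => [i | [|i]] /=.
- by have [] := next_spec (iter i (fun n => next n.+1) (next 0)).+1.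
- by have [] := next_spec 0.
- by have [] := next_spec (iter i (fun n => next n.+1) (next 0)).+1.
Qed.

Lemma recurrent_value_of_bounded (f : nat -> nat) (P : nat -> Prop) K :
  (forall N, exists n, N <= n /\ P n /\ f n < K) ->
  exists v, forall N, exists n, N <= n /\ P n /\ f n = v.
Proof.
elim: K => [|K IH] hK; first by have [n [_ []]] := hK 0.
have [|not_rec] := classic (forall N, exists n, N <= n /\ P n /\ f n = K); first by exists K.
apply: IH => N.
have [N0 hN0] : exists N0, forall n, N0 <= n -> ~ (P n /\ f n = K).
  apply: NNPP => hN0; apply: not_rec => N1; apply: NNPP => hN1; apply: hN0.
  by exists N1 => n hn [hPn hfn]; apply: hN1; exists n.
have [n [hn [hPn hfn]]] := hK (maxn N N0).
exists n; split; first lia.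
split => //; have : f n <> K by move=> e; apply: (hN0 n); [lia | split].
lia.
Qed.

Lemma eventually_all_lt (Q : nat -> nat -> Prop) K :
  (forall i N N', Q i N -> N <= N' -> Q i N') -> (forall i, exists N, Q i N) ->
  exists N, forall i, i < K -> Q i N.
Proof.
move=> Q_mono hQ; elim: K => [|K [N1 IH]]; first by exists 0.
have [N2 hN2] := hQ K; exists (maxn N1 N2) => i; rewrite ltnS leq_eqVlt.
case/orP => [/eqP -> | hi]; first by apply: Q_mono hN2 _; rewrite leq_maxr.
by apply: Q_mono (IH i hi) _; rewrite leq_maxl.
Qed.

Section Crossings.
Variables (Sigma : finType) (w : nat -> Sigma) (a : Sigma) (m k : nat).

Lemma exists_down_crossing n d :
  k * n <= m * occ w a 0 n -> m * occ w a 0 (n + d) < k * (n + d) ->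
  exists2 p, n <= p & k * p <= m * occ w a 0 p /\ m * occ w a 0 p.+1 < k * p.+1.
Proof.
elim: d n => [|d IH] n above below; first by rewrite addn0 in below; lia.
have [above'|] := leqP (k * n.+1) (m * occ w a 0 n.+1); last by exists n.
by have [|p hp] := IH n.+1 above'; [rewrite addSnnS | exists p => //; lia].
Qed.

Lemma down_crossing_excess p :
  k * p <= m * occ w a 0 p -> m * occ w a 0 p.+1 < k * p.+1 ->
  m * occ w a 0 p - k * p < k.
Proof. by rewrite occS mulnDr mulnS; lia. Qed.

Lemma occ_block_of_equal_excess i j : i <= j ->
  k * i <= m * occ w a 0 i -> k * j <= m * occ w a 0 j ->
  m * occ w a 0 i - k * i = m * occ w a 0 j - k * j ->
  m * occ w a i j = k * (j - i).
Proof.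
move=> hij; rewrite (@occ_cat _ w a 0 i j) // mulnDr mulnBr.
have : k * i <= k * j by rewrite leq_mul2l hij orbT.
lia.
Qed.

Hypotheses (card_Sigma : #|Sigma| = 2) (m_gt0 : 0 < m).

Lemma wap_of_recurrent_excess v :
  (forall N, exists n, N <= n /\ k * n <= m * occ w a 0 n /\ m * occ w a 0 n - k * n = v) ->
  weak_abelian_periodic w.
Proof.
move=> /increasing_seq_of_unbounded [b [b_incr hb]]; exists b; split => //.
have occ_block i : m * occ w a (b i) (b i.+1) = k * (b i.+1 - b i).
  have [above_i excess_i] := hb i; have [above_i' excess_i'] := hb i.+1.
  by apply: occ_block_of_equal_excess; rewrite ?excess_i ?excess_i' // ltnW.
have block_ratio i : rho w a (b i) (b i.+1) = rho w a (b 0) (b 1).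
  rewrite /rho; apply: ratio_eq; rewrite ?subn_gt0 //.
  by apply/eqP; rewrite -(eqn_pmul2l m_gt0) !mulnA !occ_block mulnAC.
move=> x i j; have [-> | x_neq_a] := eqVneq x a; first by rewrite !block_ratio.
by rewrite !(rho_compl w card_Sigma x_neq_a) ?b_incr // !block_ratio.
Qed.

Lemma wap_of_oscillation :
  (forall N, exists n, N <= n /\ k * n <= m * occ w a 0 n) ->
  (forall N, exists n, N <= n /\ m * occ w a 0 n < k * n) ->
  weak_abelian_periodic w.
Proof.
move=> above below.
have [|v hv] := @recurrent_value_of_bounded (fun n => m * occ w a 0 n - k * n)
    (fun n => k * n <= m * occ w a 0 n) k; last exact: wap_of_recurrent_excess hv.
move=> N; have [n0 [hn0 above0]] := above N; have [n1 [hn1 below1]] := below n0.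
have [|p hp [above_p below_p]] := @exists_down_crossing n0 (n1 - n0) above0.
  by rewrite subnKC.
by exists p; split; [lia | split => //; apply: down_crossing_excess].
Qed.

Lemma eventually_comparable : ~ weak_abelian_periodic w ->
  (exists N, forall n, N <= n -> k * n <= m * occ w a 0 n) \/
  (exists N, forall n, N <= n -> m * occ w a 0 n < k * n).
Proof.
move=> not_wap; apply: NNPP => not_eventually; apply: not_wap.
apply: wap_of_oscillation => N; apply: NNPP => hN; apply: not_eventually.
- by right; exists N => n hn; rewrite ltnNge; apply/negP => h; apply: hN; exists n.
- by left; exists N => n hn; rewrite leqNgt; apply/negP => h; apply: hN; exists n.
Qed.

End Crossings.

Section BinaryFrequencies.
Local Open Scope R_scope.

Lemma ratio_close k M c p c' p' : (0 < p)%N -> (0 < p')%N -> (0 < M)%N ->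
  (k * p <= M * c < k.+1 * p)%N -> (k * p' <= M * c' < k.+1 * p')%N ->
  Rabs (INR c / INR p - INR c' / INR p') < / INR M.
Proof.
move=> hp hp' hM hc hc'.
have bounds c0 p0 : (0 < p0)%N -> (k * p0 <= M * c0 < k.+1 * p0)%N ->
    INR k / INR M <= INR c0 / INR p0 < INR k.+1 / INR M.
  move=> hp0 /andP[lo hi].
  by split; [apply: ratio_le | apply: ratio_lt]; rewrite // [(c0 * M)%N]mulnC.
have := bounds c p hp hc; have := bounds c' p' hp' hc'.
have hM' := INR_gt0 hM.
have -> : INR k.+1 / INR M = INR k / INR M + / INR M by rewrite S_INR; field; lra.
by move=> [? ?] [? ?]; apply: Rabs_def1; lra.
Qed.

Variables (Sigma : finType) (w : nat -> Sigma) (a : Sigma).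
Hypothesis card_Sigma : #|Sigma| = 2%N.

Lemma freq_exists_of_not_wap : ~ weak_abelian_periodic w -> freq_exists w a.
Proof.
move=> not_wap; suff /R_complete [l hl] : Cauchy_crit (fun n => rho w a 0 n.+1).
  by exists l.
move=> eps he; have [M hM] := INR_archimed eps 1 he.
have M_gt0 : (0 < M)%N by rewrite lt0n; apply/eqP => M0; move: hM; rewrite M0 /=; lra.
have [N settled] : exists N, forall k, (k < M.+2)%N ->
    (forall n, N <= n -> k * n <= M * occ w a 0 n)%N \/
    (forall n, N <= n -> M * occ w a 0 n < k * n)%N.
  apply: eventually_all_lt => [k N N' [above|below] hN | k].
  - by left => n hn; apply: above; apply: leq_trans hn.
  - by right => n hn; apply: below; apply: leq_trans hn.
  - case: (@eventually_comparable _ w a M k card_Sigma M_gt0 not_wap) => [[N h]|[N h]].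
      by exists N; left.
    by exists N; right.
exists N => n n' /leP hn /leP hn'; rewrite /R_dist /rho !subn0.
set p := n.+1; set c := occ w a 0 p; pose k0 := (M * c %/ p)%N.
have hp : (0 < p)%N by [].
have lo : (k0 * p <= M * c)%N by apply: leq_divM.
have hi : (M * c < k0.+1 * p)%N by apply: ltn_ceil.
have k0_le : (k0 <= M)%N.
  have : (c <= p)%N by have := occ_le_len w a 0 p; rewrite subn0.
  by rewrite -(leq_pmul2r hp); nia.
have [above | below] := settled k0 ltac:(lia); last by have := below p ltac:(lia); lia.
have [above' | below'] := settled k0.+1 ltac:(lia); first by have := above' p ltac:(lia); lia.
have inv_M_lt : / INR M < eps.
  apply: (Rmult_lt_reg_l (INR M)); first exact: INR_gt0.
  by rewrite Rinv_r; [lra | apply: not_0_INR; lia].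
apply: Rlt_trans (ratio_close (k := k0) (c' := occ w a 0 n'.+1) hp _ M_gt0 _ _) inv_M_lt.
- by [].
- by rewrite lo hi.
- by rewrite above ?below' //; lia.
Qed.

End BinaryFrequencies.

Theorem proposition3 :
  (exists (k : nat) (w : nat -> 'I_k),
      (forall a : 'I_k, exists l : R, freq_is w a l /\ is_rational l) /\
      ~ weak_abelian_periodic w)
  /\
  (forall (Sigma : finType) (w : nat -> Sigma),
      (exists (a : Sigma) (l : R), freq_is w a l /\ ~ is_rational l) ->
      ~ weak_abelian_periodic w)
  /\
  (forall (Sigma : finType) (w : nat -> Sigma),
      #|Sigma| = 2 -> ~ has_letter_freqs w -> weak_abelian_periodic w)
  /\
  (exists w : nat -> 'I_3,
      ~ has_letter_freqs w /\ ~ weak_abelian_periodic w).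
Proof.
split; first exact: rational_freqs_not_wap_exists.
split.
  move=> Sigma w [a [l [hl irrational_l]]] wap.
  exact/irrational_l/(freq_rational_of_wap wap hl).
split; last exact: no_freqs_not_wap_exists.
move=> Sigma w card_Sigma no_freqs; apply: NNPP => not_wap; apply: no_freqs => a.
exact: freq_exists_of_not_wap card_Sigma not_wap.
Qed.
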